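(* Let $G$ be a finite simple group and $c:X\twoheadrightarrow G$ a surjective generalized subgroup of $G$. Then every non-trivial homomorphism $f:X\to G$ can be written as $f=hc$ for some automorphism $h:G\to G$.
   Context: A homomorphism $c:X\to G$ is a generalized subgroup of $G$ if the map $\mathrm{Hom}(X,X)\to\mathrm{Hom}(X,G)$, $g\mapsto cg$, is injective. *)

From HB Require Import structures.
From mathcomp Require Import all_boot all_fingroup.
Set Implicit Arguments. Unset Strict Implicit. Unset Printing Implicit Defensive.
Local Open Scope group_scope.

Definition is_hom (X Y : groupType) (f : X -> Y) : Prop :=
  forall x y : X, f (x * y) = f x * f y.

(* c : X -> G is a generalized subgroup of G: the map Hom(X,X) -> Hom(X,G),
   g |-> c \o g, is injective. *)
Definition generalized_subgroup (X G : groupType) (c : X -> G) : Prop :=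
  forall g1 g2 : X -> X, is_hom g1 -> is_hom g2 ->
    (forall x, c (g1 x) = c (g2 x)) -> forall x, g1 x = g2 x.

From HB Require Import structures.
From mathcomp Require Import all_boot all_fingroup all_solvable.
From mathcomp Require Import boolp.
Set Implicit Arguments. Unset Strict Implicit. Unset Printing Implicit Defensive.
Local Open Scope group_scope.

(* Let c : X ->> G be a surjective generalized subgroup of the finite simple
   group G, let K := ker c, and let f : X -> G be a homomorphism.  Since G is
   simple, the normal subgroup c (ker f) of G is either trivial or all of G.
   - If it is trivial, ker f <= K; then h := f \o s (s a section of c) is an
     injective, hence bijective, endomorphism of G and f = h \o c, so h is an
     automorphism ([factor_through_surjection]).
   - Otherwise f K = f X, and we show that f is trivial
     ([kernel_image_trivial]).  Being a generalized subgroup, X has no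
     nontrivial endomorphism with values in K; applied to conjugations this
     makes K central, and applied to the transfer X -> K it shows that K has
     exponent dividing #|G|.  Then f X = f K is abelian; if it were
     nontrivial it would map onto a cyclic group <[u]> of prime order, and
     lifting u to an element of K of the same order would produce a
     nontrivial endomorphism of X with values in K. *)

Section Homomorphisms.
Variables (X Y : groupType) (f : X -> Y).
Hypothesis f_hom : is_hom f.

Lemma hom1 : f 1 = 1.
Proof. by apply: (@mulgI _ (f 1)); rewrite -f_hom !mulg1. Qed.

Lemma homV x : f x^-1 = (f x)^-1.
Proof. by apply: (@mulgI _ (f x)); rewrite -f_hom !mulgV hom1. Qed.

Lemma homX x n : f (x ^+ n) = f x ^+ n.
Proof. by elim: n => [|n IHn]; rewrite ?hom1 // !expgS f_hom IHn. Qed.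

Lemma homJ x y : f (x ^ y) = f x ^ f y.
Proof. by rewrite !conjgE !f_hom homV. Qed.

Lemma hom_eqE x y : (f x = f y) <-> (f (x^-1 * y) = 1).
Proof.
rewrite f_hom homV; split=> [-> | e]; first exact: mulVg.
by apply: (@mulgI _ (f x)^-1); rewrite e mulVg.
Qed.

End Homomorphisms.

Lemma surj_section (X : groupType) (T : finType) (c : X -> T) :
  (forall y, exists x, c x = y) -> exists s : T -> X, cancel s c.
Proof.
move=> c_surj; have ex y : exists x, c x == y by have [x <-] := c_surj y; exists x.
by exists (fun y => xchoose (ex y)) => y; apply/eqP/(xchooseP (ex y)).
Qed.

Section ImageSets.
Variables (X : groupType) (gT : finGroupType) (f : X -> gT).
Hypothesis f_hom : is_hom f.

Definition image_of (P : X -> Prop) : {set gT} :=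
  [set y | `[< exists2 x, P x & f x = y >]].

Lemma image_ofP (P : X -> Prop) y :
  reflect (exists2 x, P x & f x = y) (y \in image_of P).
Proof. by rewrite inE; apply: asboolP. Qed.

Lemma image_of_group (P : X -> Prop) :
  P 1 -> (forall x y, P x -> P y -> P (x * y)) -> group_set (image_of P).
Proof.
move=> P1 PM; apply/group_setP; split; first by apply/image_ofP; exists 1; rewrite ?hom1.
move=> _ _ /image_ofP[x Px <-] /image_ofP[y Py <-]; apply/image_ofP.
by exists (x * y); rewrite ?f_hom //; apply: PM.
Qed.

End ImageSets.

Lemma prod_perm_central (X : groupType) (I : eqType) (r1 r2 : seq I) (F : I -> X) :
  (forall i y, commute (F i) y) -> perm_eq r1 r2 ->
  \prod_(i <- r1) F i = \prod_(i <- r2) F i.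
Proof.
move=> F_central; elim: r1 r2 => [|a r1 IHr1] r2 r12.
  by move: r12; rewrite perm_sym => /perm_nilP ->.
have r2a : a \in r2 by rewrite -(perm_mem r12) mem_head.
move: r12; case/splitPr: r2a => p1 p2 r12.
rewrite big_cons (IHr1 (p1 ++ p2)); last first.
  by rewrite -(perm_cons a) (perm_trans r12) // (perm_catCA p1 [:: a] p2).
by rewrite !big_cat big_cons mulgA F_central -mulgA.
Qed.

(* Hence such a product over a finite type is invariant under reindexing by
   a bijection; this is what makes the transfer below a homomorphism. *)
Lemma prod_reindex_central (X : groupType) (T : finType) (F : T -> X) (sigma : T -> T) :
  injective sigma -> (forall t y, commute (F t) y) ->
  \prod_(t : T) F (sigma t) = \prod_(t : T) F t.
Proof.
move=> sigma_inj F_central; rewrite -(big_map sigma xpredT F).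
apply: prod_perm_central => //; apply: uniq_perm.
- by rewrite (map_inj_uniq sigma_inj) index_enum_uniq.
- exact: index_enum_uniq.
move=> t; rewrite mem_index_enum; apply/mapP.
have [sigma' _ sigmaK] := injF_bij sigma_inj.
by exists (sigma' t); rewrite ?mem_index_enum ?sigmaK.
Qed.

Section SurjectionOntoFiniteGroup.
Variables (X : groupType) (gT : finGroupType) (c f : X -> gT).
Hypotheses (c_hom : is_hom c) (f_hom : is_hom f).
Variable s : gT -> X.
Hypothesis sK : cancel s c.

(* If ker f is contained in ker c, then f = h \o c for an automorphism h of G:
   h := f \o s is injective, hence bijective as G is finite, and this forces
   f to factor through c. *)
Lemma factor_through_surjection :
  (forall k, f k = 1 -> c k = 1) ->
  exists h : {perm gT}, h \in Aut [set: gT] /\ forall x, f x = h (c x).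
Proof.
move=> ker_sub.
have f_eq_c x y : f x = f y -> c x = c y.
  by move=> /(hom_eqE f_hom)/ker_sub/(hom_eqE c_hom).
pose h g := f (s g).
have h_inj : injective h by move=> g1 g2 /f_eq_c; rewrite !sK.
have f_hc x : f x = h (c x).
  have [h' _ h'K] := injF_bij h_inj.
  by move/f_eq_c: (h'K (f x)); rewrite sK => <-; rewrite h'K.
exists (perm h_inj); split=> [|x]; last by rewrite permE.
rewrite inE; apply/andP; split; first exact/subsetP.
apply/morphicP => g1 g2 _ _; rewrite !permE.
by rewrite -{1}(sK g1) -{1}(sK g2) -c_hom -f_hc f_hom.
Qed.

(* When G is simple, c (ker f) is a normal subgroup of G, so either it is
   trivial (ker f is contained in ker c) or it is all of G (f (ker c) = f X). *)
Lemma simple_kernel_dichotomy :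
  simple [set: gT] ->
  (forall k, f k = 1 -> c k = 1) \/ (forall x, exists2 n, c n = 1 & f n = f x).
Proof.
move=> G_simple; pose ker_f k := f k = 1.
have S_group : group_set (image_of c ker_f).
  by apply: image_of_group => // [|x y fx fy]; rewrite /ker_f ?hom1 ?f_hom ?fx ?fy ?mulg1.
pose S := Group S_group.
have S_normal : S <| [set: gT].
  rewrite /normal subsetT; apply/subsetP => y _; rewrite inE.
  apply/subsetP => _ /imsetP[_ /image_ofP[k fk <-] ->].
  apply/image_ofP; exists (k ^ s y); last by rewrite homJ // sK.
  by rewrite /ker_f homJ // fk conj1g.
case/simpleP: G_simple => _ /(_ S S_normal) [S1 | ST]; [left | right].
  move=> k fk; have : c k \in S by apply/image_ofP; exists k.
  by rewrite S1 => /set1P.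
move=> x; have /image_ofP[k fk ck] : c x \in S by rewrite ST in_setT.
exists (k^-1 * x); first by apply/(hom_eqE c_hom).
by rewrite f_hom homV // fk invg1 mul1g.
Qed.

End SurjectionOntoFiniteGroup.

Lemma exists_power_of_order_q (X : groupType) (x : X) (q e : nat) :
  1 < q -> 0 < e -> x ^+ e = 1 -> (forall j, x ^+ j = 1 -> q %| j) ->
  exists2 k, x ^+ k != 1 & (x ^+ k) ^+ q = 1.
Proof.
move=> q_gt1 e_gt0 xe q_dvd.
have ex_period : exists o, (0 < o) && (x ^+ o == 1).
  by exists e; rewrite e_gt0 xe eqxx.
case: (ex_minnP ex_period) => o /andP[o_gt0 /eqP xo] o_min.
have q_o : q %| o := q_dvd o xo.
exists (o %/ q); last by rewrite -expgM divnK.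
have q_le_o : q <= o := dvdn_leq o_gt0 q_o.
apply/eqP => x_oq; have := o_min (o %/ q).
rewrite x_oq eqxx divn_gt0 ?(ltnW q_gt1) // q_le_o => /(_ isT).
by rewrite leqNgt ltn_Pdiv.
Qed.

Lemma lift_cyclic_hom (X : groupType) (Q : finGroupType) (u : Q) (phi : X -> Q) (y : X) :
  is_hom phi -> (forall x, phi x \in <[u]>) -> y ^+ #[u] = 1 ->
  exists2 psi : X -> X, is_hom psi & forall x i, phi x = u ^+ i -> psi x = y ^+ i.
Proof.
move=> phi_hom phi_u yu.
have ex_exp x : exists i, phi x == u ^+ i by have /cycleP[i ->] := phi_u x; exists i.
pose l x := xchoose (ex_exp x).
have lP x : phi x = u ^+ l x := eqP (xchooseP (ex_exp x)).
have psiE x i : phi x = u ^+ i -> y ^+ l x = y ^+ i.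
  move=> e; have : l x = i %[mod #[u]] by apply/eqP; rewrite -eq_expg_mod_order -lP e.
  move=> li; rewrite (divn_eq (l x) #[u]) (divn_eq i #[u]) li !expgD.
  by rewrite !(mulnC _ #[u]) !expgM yu !expg1n.
exists (fun x => y ^+ l x) => [x1 x2 | x i /psiE //].
by rewrite -expgD (psiE _ (l x1 + l x2)) // phi_hom expgD -!lP.
Qed.

Section GeneralizedSubgroup.
Variables (X : groupType) (gT : finGroupType) (c : X -> gT).
Hypotheses (c_hom : is_hom c) (c_gen : generalized_subgroup c).

(* The only endomorphism of X with values in ker c is the trivial one, since
   it has the same composite with c as the trivial endomorphism. *)
Lemma gen_hom_into_kernel (phi : X -> X) :
  is_hom phi -> (forall x, c (phi x) = 1) -> forall x, phi x = 1.
Proof.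
move=> phi_hom phi_ker; apply: (c_gen phi_hom) => [x y | x]; first by rewrite mulg1.
by rewrite phi_ker hom1.
Qed.

(* ker c is central: conjugation by n in ker c has the same composite with c
   as the identity. *)
Lemma kernel_central n : c n = 1 -> forall y, commute n y.
Proof.
move=> cn y; have conj_hom : is_hom (fun x : X => x ^ n) by move=> ? ?; rewrite conjMg.
have /(_ y) yn : forall x, x = x ^ n.
  by apply: c_gen conj_hom _ => [// | x]; rewrite homJ // cn conjg1.
by rewrite /commute {1}yn conjgE mulKVg.
Qed.

Variable s : gT -> X.
Hypothesis sK : cancel s c.

(* The transfer of X into the central subgroup ker c of finite index; each
   factor lies in ker c. *)
Definition transfer (x : X) : X := \prod_(g : gT) (s g * x * (s (g * c x))^-1).

Lemma transfer_factor_in_kernel g x : c (s g * x * (s (g * c x))^-1) = 1.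
Proof. by rewrite !c_hom homV // !sK mulgV. Qed.

Lemma transfer_hom : is_hom transfer.
Proof.
have central g x y := kernel_central (transfer_factor_in_kernel g x) y.
move=> x y; rewrite /transfer.
transitivity (\prod_(g : gT) ((s g * x * (s (g * c x))^-1) *
                               (s (g * c x) * y * (s (g * c x * c y))^-1))).
  by apply: eq_bigr => g _; rewrite c_hom !mulgA mulgVK.
rewrite prodgM_commute => [|g h _ _]; last exact: central.
congr (_ * _); apply: (prod_reindex_central (fun g => _)) => [|g]; last exact: central.
exact: mulIg.
Qed.

Lemma transfer_in_kernel x : c (transfer x) = 1.
Proof.
apply: (big_ind (fun z => c z = 1)) => [|a b ca cb|g _]; last exact: transfer_factor_in_kernel.
  exact: hom1.
by rewrite c_hom ca cb mulg1.
Qed.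

(* On ker c the transfer is n |-> n ^+ #|G|; as it is trivial, ker c has
   exponent dividing #|G|. *)
Lemma kernel_exponent n : c n = 1 -> n ^+ #|gT| = 1.
Proof.
move=> cn; rewrite -(gen_hom_into_kernel transfer_hom transfer_in_kernel n).
rewrite /transfer -[#|gT|]/#|predT| -prodg_const; apply: eq_bigr => g _.
by rewrite cn mulg1 -(kernel_central cn (s g)) mulgK.
Qed.

(* A homomorphism from X to a cyclic group of prime order is trivial on ker c:
   otherwise it would map some n in ker c to a generator u, n has a power n0
   of order #[u] in ker c, and x |-> n0 ^+ (log_u phi x) would be a nontrivial
   endomorphism of X with values in ker c. *)
Lemma prime_cyclic_hom_kernel (Q : finGroupType) (u : Q) (phi : X -> Q) :
  is_hom phi -> prime #[u] -> (forall x, phi x \in <[u]>) ->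
  forall n, c n = 1 -> phi n = 1.
Proof.
move=> phi_hom u_prime phi_u n cn; apply/eqP/negPn/negP => phi_n_nt.
have gen_n : <[u]> = <[phi n]>.
  by apply: nt_gen_prime; rewrite // !inE phi_n_nt phi_u.
have phi_n x : phi x \in <[phi n]> by rewrite -gen_n.
have prime_n : prime #[phi n] by rewrite orderE -gen_n.
have [k n0_nt n0_order] : exists2 k, n ^+ k != 1 & (n ^+ k) ^+ #[phi n] = 1.
  apply: (exists_power_of_order_q (e := #|gT|)) => [| | |j nj].
  - exact: prime_gt1.
  - by apply/card_gt0P; exists 1.
  - exact: kernel_exponent.
  by rewrite order_dvdn -(homX phi_hom) nj (hom1 phi_hom).
have [psi psi_hom psiE] := lift_cyclic_hom phi_hom phi_n n0_order.
have psi_ker x : c (psi x) = 1.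
  have /cycleP[i phi_x] := phi_n x.
  by rewrite (psiE x i phi_x) !(homX c_hom) cn !expg1n.
move/negP: n0_nt; apply; apply/eqP.
by rewrite -[n ^+ k]expg1 -(psiE n 1%N) ?expg1 // (gen_hom_into_kernel psi_hom psi_ker).
Qed.

(* If f (ker c) = f X then f is trivial: f X is then abelian, as ker c is
   central; a nontrivial f X would have a quotient of prime order, whence a
   homomorphism to a cyclic group of prime order nontrivial on ker c. *)
Lemma kernel_image_trivial (hT : finGroupType) (f : X -> hT) :
  is_hom f -> (forall x, exists2 n, c n = 1 & f n = f x) -> forall x, f x = 1.
Proof.
move=> f_hom f_ker.
pose F := Group (image_of_group f_hom (P := fun _ => True) I (fun _ _ _ _ => I)).
have inF x : f x \in F by apply/image_ofP; exists x.
have F_abelian : abelian F.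
  apply/centsP => _ /image_ofP[x1 _ <-] _ /image_ofP[x2 _ <-].
  have [n1 cn1 <-] := f_ker x1; have [n2 cn2 <-] := f_ker x2.
  by rewrite /commute -!f_hom (kernel_central cn1).
suff /eqP F1 : F :==: 1 by move=> x; have := inF x; rewrite F1 => /set1P.
apply/negPn/negP => F_nt.
have [M M_normal M_prime] := sol_prime_factor_exists (abelian_sol F_abelian) F_nt.
have F_norm : F \subset 'N(M) := normal_norm M_normal.
have /prime_cyclic/cyclicP[u FM_u] : prime #|F / M| by rewrite card_quotient.
pose phi x := coset M (f x).
have phi_hom : is_hom phi.
  by move=> x y; rewrite /phi f_hom morphM // (subsetP F_norm) ?inF.
have phi_u x : phi x \in <[u]> by rewrite -FM_u mem_quotient ?inF.
have u_prime : prime #[u] by rewrite orderE -FM_u card_quotient.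
have /negP[] : ~~ (F \subset M) by rewrite -indexg_gt1 prime_gt1.
apply/subsetP => _ /image_ofP[x _ <-].
apply: coset_idr; first exact: subsetP F_norm _ (inF x).
have [n cn <-] := f_ker x; exact: prime_cyclic_hom_kernel phi_hom u_prime phi_u n cn.
Qed.

End GeneralizedSubgroup.

Unset Implicit Arguments.

Theorem lemma8p3 (gT : finGroupType) (X : groupType) (c : X -> gT)
    (HG : simple [set: gT])
    (Hc : is_hom c) (Hsurj : forall y : gT, exists x : X, c x = y)
    (Hgen : generalized_subgroup c)
    (f : X -> gT) (Hf : is_hom f) (Hnt : exists x : X, f x <> 1) :
  exists h : {perm gT}, h \in Aut [set: gT] /\ forall x : X, f x = h (c x).
Proof.
have [s sK] := surj_section Hsurj.
have [ker_sub | ker_image] := simple_kernel_dichotomy Hc Hf sK HG.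
  exact: (factor_through_surjection Hc Hf sK ker_sub).
have [x fx_nt] := Hnt; case: fx_nt.
exact: (kernel_image_trivial Hc Hgen sK Hf ker_image x).
Qed.
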